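(* Assume $\mathrm{recc}(C)\subseteq\mathrm{recc}(P^B)$. Then $$P^B\setminus T^C=\bigcup_{k\in N_2\cup\{0\}}\big(P^B\setminus S_k^C\big).$$
   Context: Let $A\in\mathbb{R}^{m\times n}$ have full row rank, $b\in\mathbb{R}^m$, and $P=\{x\in\mathbb{R}^n_+ : Ax=b\}$. Let $C\subseteq\mathbb{R}^n$ be an open convex set. Fix a basis $B\subseteq\{1,\dots,n\}$ of $P$ with nonbasic set $N=\{1,\dots,n\}\setminus B$. Write $P=\{x: x_i=\bar b_i-\sum_{j\in N}\bar a_{ij}x_j\ (i\in B),\ x_j\ge0\ (j=1,\dots,n)\}$ with $\bar b\ge0$. The basic solution $\bar x$ has $\bar x_i=\bar b_i$ ($i\in B$) and $\bar x_i=0$ ($i\in N$). $P^B$ is obtained by dropping the constraints $x_i\ge0$ for $i\in B$. For $j\in N$, $\bar r^j$ is given by $\bar r^j_k=-\bar a_{kj}$ ($k\in B$), $\bar r^j_j=1$, and $\bar r^j_k=0$ ($k\in N\setminus\{j\}$). Thus $P^B=\{\bar x+\sum_{j\in N}x_j\bar r^j: x_j\ge0\}$, a translated simplicial cone with linearly independent extreme rays $\bar r^j$. It is assumed that $\bar x\notin\mathrm{cl}(C)$. For $j\in N$, $\alpha_j=\inf\{\lambda\ge0:\bar x+\lambda\bar r^j\in C\}$ and $\beta_j=\sup\{\lambda\ge0:\bar x+\lambda\bar r^j\in C\}$, with $\alpha_j=+\infty$, $\beta_j=-\infty$ if that halfline misses $C$. The set $N$ is partitioned into - $N_0=\{j:\alpha_j=+\infty,\beta_j=-\infty\}$,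 - $N_1=\{j:\alpha_j\in(0,\infty),\beta_j=+\infty\}$, - $N_2=\{j:\alpha_j\in(0,\infty),\beta_j\in(\alpha_j,\infty)\}$. Let $N_{12}=N_1\cup N_2$. For a set $K$, $\mathrm{recc}(K)=\{d: x+\lambda d\in K\ \forall x\in K,\lambda\ge0\}$. Define - $T^C=\{\bar x\}+\mathrm{conv}\big(\bigcup_{j\in N_{12}}\{\lambda\bar r^j:\alpha_j<\lambda<\beta_j\}\big)+\mathrm{recc}(C)$; - $S_0^C=\{\bar x\}+\mathrm{conv}\big(\bigcup_{j\in N_{12}}\{\lambda\bar r^j:\lambda>\alpha_j\}\big)+\mathrm{recc}(C)$; - for each $k\in N_2$, $S_k^C=\{\bar x\}+\mathrm{conv}\big(\bigcup_{j\in N_2}\{\lambda\bar r^j:0\le\lambda<\beta_j\}\big)+\{\lambda\bar r^k:\lambda\le0\}+\mathrm{recc}(C)$. (The index $0$ is not an element of $N$.) *)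

From HB Require Import structures.
From mathcomp Require Import all_boot all_order all_algebra.
From mathcomp Require Import all_classical all_reals all_analysis.
Set Implicit Arguments. Unset Strict Implicit. Unset Printing Implicit Defensive.
Import Order.TTheory GRing.Theory Num.Theory.
Import numFieldNormedType.Exports.
Local Open Scope classical_set_scope.
Local Open Scope ring_scope.

(* Points of R^n are column vectors 'cV[R]_n (with the matrix topology of
   mathcomp-analysis).  Coordinates x_i are written  x i 0. *)
Section Defs.
Variables (R : realType) (m n : nat).
Local Notation vec := 'cV[R]_n.

Definition recc (K : set vec) : set vec :=
  [set d | forall x lam, K x -> 0 <= lam -> K (x + lam *: d)].

Definition conv_hull (S : set vec) : set vec :=
  [set x | exists (k : nat) (p : 'I_k -> vec) (w : 'I_k -> R),
      [/\ forall i, S (p i), forall i, 0 <= w i, \sum_(i < k) w i = 1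
        & x = \sum_(i < k) w i *: p i]].

Definition msum (X Y : set vec) : set vec :=
  [set z | exists x y, [/\ X x, Y y & z = x + y]].

Variables (A : 'M[R]_(m, n)) (b : 'cV[R]_m) (B : {set 'I_n}).

Definition polyP : set vec := [set x | A *m x = b /\ forall i, 0 <= x i 0].

(* B is a basis: |B| = m and the columns of A indexed by B are linearly
   independent (i.e. A_B is invertible). *)
Definition is_basis : Prop :=
  #|B| = m /\ forall x : vec, (forall j, j \notin B -> x j 0 = 0) ->
                              A *m x = 0 -> x = 0.

(* basic solution xbar: the unique x with Ax = b, x_N = 0
   (i.e. xbar_B = bbar = A_B^{-1} b, xbar_N = 0). *)
Definition xbar : vec :=
  xget 0 [set x | A *m x = b /\ forall j, j \notin B -> x j 0 = 0].

(* rbar^j (j in N): rbar_k = -abar_kj (k in B), rbar_j = 1, rbar_k = 0 (k in N\{j});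
   equivalently the unique r with A r = 0, r_j = 1, r_k = 0 for k in N \ {j}. *)
Definition rbar (j : 'I_n) : vec :=
  xget 0 [set r | [/\ A *m r = 0, r j 0 = 1 &
                   forall k, k \notin B -> k != j -> r k 0 = 0]].

(* P^B: drop the constraints x_i >= 0 for i in B *)
Definition PB : set vec :=
  [set x | A *m x = b /\ forall j, j \notin B -> 0 <= x j 0].

Variable (C : set vec).

Definition hit_set (j : 'I_n) : set R :=
  [set lam | 0 <= lam /\ C (xbar + lam *: rbar j)].

(* alpha_j = inf{..} (= +oo if empty), beta_j = sup{..} (= -oo if empty) *)
Definition alpha (j : 'I_n) : \bar R := ereal_inf (EFin @` hit_set j).
Definition beta (j : 'I_n) : \bar R := ereal_sup (EFin @` hit_set j).

Definition N0 : set 'I_n :=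
  [set j | j \notin B /\ alpha j = +oo%E /\ beta j = -oo%E].
Definition N1 : set 'I_n :=
  [set j | j \notin B /\ (0 < alpha j < +oo)%E /\ beta j = +oo%E].
Definition N2 : set 'I_n :=
  [set j | j \notin B /\ (0 < alpha j < +oo)%E /\ (alpha j < beta j < +oo)%E].
Definition N12 : set 'I_n := N1 `|` N2.

Definition TC : set vec :=
  msum [set xbar]
    (msum (conv_hull [set v | exists j lam, [/\ N12 j,
                (alpha j < lam%:E)%E, (lam%:E < beta j)%E & v = lam *: rbar j]])
          (recc C)).

Definition S0C : set vec :=
  msum [set xbar]
    (msum (conv_hull [set v | exists j lam, [/\ N12 j,
                (alpha j < lam%:E)%E & v = lam *: rbar j]])
          (recc C)).

Definition SkC (k : 'I_n) : set vec :=
  msum [set xbar]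
    (msum (conv_hull [set v | exists j lam, [/\ N2 j, 0 <= lam,
                (lam%:E < beta j)%E & v = lam *: rbar j]])
      (msum [set v | exists lam, lam <= 0 /\ v = lam *: rbar k]
          (recc C))).

End Defs.

(* P^B is the translated cone xbar + cone(rbar^j, j in N), and a ray point
   lam rbar^j (j in N12) generates T^C exactly when 1/beta_j < 1/lam < 1/alpha_j
   (with 1/beta_j = 0 on N1).  Hence a cone point q = sum_j q_j rbar^j supported
   on N12 lies in the convex hull of these generators as soon as
   sum_j q_j/alpha_j > 1 > sum_j q_j/beta_j.
   The inclusions T^C <= S_0^C and T^C <= S_k^C are direct, since for j in N1 the
   open convex set C contains the whole ray beyond alpha_j, so rbar^j is a
   recession direction of C.  Conversely let xbar + mu lie in S_0^C and in every
   S_k^C; as recc C <= recc P^B, recession directions of C are cone directions.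
   S_0^C gives e_0 in recc C with mu - e_0 in the cone and sum (mu - e_0)_j/alpha_j > 1.
   Each S_k^C gives some e_k in recc C that violates the cone constraint at most in
   coordinate k.  As long as sum (mu - e)_j/beta_j >= 1, mixing such an e with a
   suitable e_k lowers this sum by a uniform amount, so some e_1 in recc C with
   mu - e_1 in the cone has sum (mu - e_1)_j/beta_j < 1, and a convex combination
   of e_0 and e_1 satisfies both inequalities. *)

From HB Require Import structures.
From mathcomp Require Import all_boot all_order all_algebra.
From mathcomp Require Import all_classical all_reals all_analysis.
From mathcomp Require Import ring lra.
Import Order.TTheory GRing.Theory Num.Theory.
Import numFieldNormedType.Exports.
Local Open Scope classical_set_scope.
Local Open Scope ring_scope.

Lemma exists_convex_comb_gt0 {R : realFieldType} {u0 u1 v0 v1 : R} :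
  0 < u1 -> 0 < v0 -> 0 < u1 + v1 -> 0 <= u0 + v0 ->
  exists th, [/\ 0 <= th, th <= 1, 0 < th * u1 + (1 - th) * u0
                 & 0 < th * v1 + (1 - th) * v0].
Proof.
move=> hu1 hv0 huv1 huv0.
have [hu0|hu0] := ltP 0 u0.
  by exists 0; rewrite !mul0r subr0 !mul1r !add0r.
have [hv1|hv1] := ltP 0 v1.
  by exists 1; rewrite !mul1r subrr !mul0r !addr0.
pose D := (u1 - u0) + (v0 - v1).
have D0 : 0 < D by rewrite /D; lra.
have det0 : 0 < u1 * v0 - u0 * v1 by nra.
have combE w0 w1 : (v0 - u0) / D * w1 + (1 - (v0 - u0) / D) * w0 =
    ((v0 - u0) * w1 + (u1 - v1) * w0) / D.
  by rewrite /D; field; rewrite gt_eqF.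
exists ((v0 - u0) / D); split.
- by rewrite divr_ge0 ?ltW //; lra.
- by rewrite ler_pdivrMr // mul1r /D; lra.
- by rewrite combE divr_gt0 //; lra.
- by rewrite combE divr_gt0 //; lra.
Qed.

Lemma descent_lt (R : archiRealFieldType) (T : Type) (E : set T) (f : T -> R)
    (c gam : R) (e0 : T) :
  0 < gam -> E e0 ->
  (forall e, E e -> c <= f e -> exists e', E e' /\ f e' <= f e - gam) ->
  exists e, E e /\ f e < c.
Proof.
move=> gam0 Ee0 step; apply: contrapT => noE.
have geC e : E e -> c <= f e.
  by move=> Ee; rewrite leNgt; apply/negP => lt; apply: noE; exists e.
have iter (N : nat) : exists e, E e /\ f e <= f e0 - N%:R * gam.
  elim: N => [|N [e [Ee le_e]]]; first by exists e0; rewrite mul0r subr0.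
  have [e' [Ee' le_e']] := step e Ee (geC e Ee).
  exists e'; split => //; apply: le_trans le_e' _.
  by rewrite -natr1 mulrDl mul1r opprD addrA lerD2r.
have gap0 : 0 <= (f e0 - c) / gam by rewrite divr_ge0 ?subr_ge0 ?geC // ltW.
have [e [Ee]] := iter (Num.bound ((f e0 - c) / gam)).
have := archi_boundP gap0; rewrite ltr_pdivrMr // => lt_gap le_e.
by have := geC e Ee; lra.
Qed.

Lemma exists_pos_lower_bound (R : realFieldType) (I : finType) (g : I -> R) :
  (forall i, 0 < g i) -> exists2 c, 0 < c & forall i, c <= g i.
Proof.
move=> g0; have S0 : 0 <= \sum_i (g i)^-1.
  by apply: sumr_ge0 => i _; rewrite invr_ge0 ltW.
exists (1 + \sum_i (g i)^-1)^-1 => [|i]; first by rewrite invr_gt0 ltr_pwDl.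
rewrite -[g i]invrK lef_pV2 ?posrE ?invr_gt0 ?ltr_pwDl //.
rewrite (bigD1 i) //= addrCA lerDl addr_ge0 // sumr_ge0 // => j _.
by rewrite invr_ge0 ltW.
Qed.

Lemma exists_large_term {R : realFieldType} {n : nat} {f : 'I_n -> R} :
  1 <= \sum_i f i -> exists i, (n.+1%:R)^-1 <= f i.
Proof.
move=> sum_ge1; apply: contrapT => /forallNP small.
have : \sum_(i < n) f i <= \sum_(i < n) (n.+1%:R)^-1.
  by apply: ler_sum => i _; rewrite leNgt; apply/negP => /ltW; apply: small.
rewrite sumr_const card_ord => /(le_trans sum_ge1).
have -> : (n.+1%:R)^-1 *+ n = n%:R / n.+1%:R :> R by rewrite mulr_natl.
by rewrite ler_pdivlMr ?ltr0n // mul1r ler_nat ltnn.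
Qed.

(** * Recession cones and convex hulls in R^n *)

Section Vectors.
Context {R : realType} {n : nat}.
Local Notation vec := 'cV[R]_n.
Implicit Types (S C : set vec) (u v x y z d : vec).

Lemma recc0 S : recc S 0.
Proof. by move=> x lam Sx _; rewrite scaler0 addr0. Qed.

Lemma reccD S u v : recc S u -> recc S v -> recc S (u + v).
Proof.
by move=> Su Sv x lam Sx lam0; rewrite scalerDr addrA; apply: Sv (Su _ _ Sx lam0) lam0.
Qed.

Lemma reccZ S a u : 0 <= a -> recc S u -> recc S (a *: u).
Proof.
by move=> a0 Su x lam Sx lam0; rewrite scalerA; apply: Su => //; apply: mulr_ge0.
Qed.

Lemma recc_sum S k (w : 'I_k -> R) (v : 'I_k -> vec) :
  (forall i, 0 <= w i) -> (forall i, recc S (v i)) ->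
  recc S (\sum_(i < k) w i *: v i).
Proof.
move=> w0 Sv; elim/big_ind: _ => //; [exact: recc0 | exact: reccD |].
by move=> i _; apply: reccZ.
Qed.

Lemma recc_conv S t u v : 0 <= t <= 1 -> recc S u -> recc S v ->
  recc S (t *: u + (1 - t) *: v).
Proof.
by case/andP=> t0 t1 Su Sv; apply: reccD; apply: reccZ; rewrite ?subr_ge0.
Qed.

Definition dotv (c : 'I_n -> R) v := \sum_j c j * v j 0.

Lemma dotvD c u v : dotv c (u + v) = dotv c u + dotv c v.
Proof. by rewrite /dotv -big_split; apply: eq_bigr => j _; rewrite !mxE mulrDr. Qed.

Lemma dotvZ c a u : dotv c (a *: u) = a * dotv c u.
Proof. by rewrite /dotv mulr_sumr; apply: eq_bigr => j _; rewrite !mxE mulrCA. Qed.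

Lemma dotvB c u v : dotv c (u - v) = dotv c u - dotv c v.
Proof. by rewrite dotvD -scaleN1r dotvZ mulN1r. Qed.

Lemma dotv_sum c k (v : 'I_k -> vec) :
  dotv c (\sum_(i < k) v i) = \sum_(i < k) dotv c (v i).
Proof.
by rewrite /dotv; under eq_bigr do rewrite summxE mulr_sumr; rewrite exchange_big.
Qed.

Lemma dotv_convl (c1 c2 : 'I_n -> R) s t v :
  dotv (fun j => s * c1 j + t * c2 j) v = s * dotv c1 v + t * dotv c2 v.
Proof. by rewrite /dotv !mulr_sumr -big_split; apply: eq_bigr => j _ /=; ring. Qed.

Lemma dotv_conv c v u1 u2 t :
  dotv c (v - (t *: u1 + (1 - t) *: u2)) =
  t * dotv c (v - u1) + (1 - t) * dotv c (v - u2).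
Proof.
have -> : v - (t *: u1 + (1 - t) *: u2) = t *: (v - u1) + (1 - t) *: (v - u2).
  by apply/matrixP => i k; rewrite !mxE; ring.
by rewrite [LHS]dotvD !dotvZ.
Qed.

Lemma conv_dotv_gt S c c0 p :
  (forall s, S s -> c0 < dotv c s) -> conv_hull S p -> c0 < dotv c p.
Proof.
move=> Sgt [k [P [w [SP w0 w1 ->]]]].
rewrite dotv_sum; under eq_bigr do rewrite dotvZ.
have [i wi] : exists i, 0 < w i.
  apply/not_existsP => /= wle0.
  have : \sum_(i < k) w i <= 0.
    by apply: sumr_le0 => i _; rewrite leNgt; apply/negP; apply: wle0.
  by rewrite w1 ler10.
rewrite -[c0]mulr1 -w1 mulr_sumr (bigD1 i) //= [ltRHS](bigD1 i) //=.
apply: ltr_leD; first by rewrite mulrC ltr_pM2l //; apply: Sgt.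
by apply: ler_sum => j _; rewrite mulrC ler_wpM2l //; apply/ltW/Sgt.
Qed.

Lemma conv_dotv_lt S c c0 p :
  (forall s, S s -> dotv c s < c0) -> conv_hull S p -> dotv c p < c0.
Proof.
have dotvN v : - dotv c v = dotv (fun j => - c j) v.
  by rewrite /dotv -sumrN; apply: eq_bigr => j _; rewrite mulNr.
move=> Slt Sp; rewrite -ltrN2 dotvN; apply: conv_dotv_gt Sp => s Ss.
by rewrite -dotvN ltrN2; apply: Slt.
Qed.

Lemma conv_coord_ge0 S j p :
  (forall s, S s -> 0 <= s j 0) -> conv_hull S p -> 0 <= p j 0.
Proof.
move=> Sge0 [k [P [w [SP w0 w1 ->]]]]; rewrite summxE.
by apply: sumr_ge0 => i _; rewrite mxE mulr_ge0 //; apply: Sge0.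
Qed.

Lemma conv_coord_eq0 S j p :
  (forall s, S s -> s j 0 = 0) -> conv_hull S p -> p j 0 = 0.
Proof.
move=> Seq0 [k [P [w [SP w0 w1 ->]]]]; rewrite summxE.
by apply: big1 => i _; rewrite mxE Seq0 // mulr0.
Qed.

Lemma conv_mulmx0 m (A : 'M[R]_(m, n)) S p :
  (forall s, S s -> A *m s = 0) -> conv_hull S p -> A *m p = 0.
Proof.
move=> SA [k [P [w [SP w0 w1 ->]]]]; rewrite mulmx_sumr.
by apply: big1 => i _; rewrite -scalemxAr SA // scaler0.
Qed.

Lemma conv_hull_sum S k (w : 'I_k -> R) (p : 'I_k -> vec) :
  (forall i, 0 <= w i) -> \sum_i w i = 1 -> (forall i, w i != 0 -> S (p i)) ->
  conv_hull S (\sum_i w i *: p i).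
Proof.
move=> w0 w1 Sp.
have [i0 wi0] : exists i, w i != 0.
  apply/not_existsP => /= wN0; move: w1; rewrite big1 => [/eqP|i _].
    by rewrite eq_sym oner_eq0.
  by have /negP := wN0 i; rewrite negbK => /eqP.
pose p' i := if w i == 0 then p i0 else p i.
exists k, p', w; split => // [i|].
  by rewrite /p'; case: eqP => [_|/eqP]; apply: Sp.
by apply: eq_bigr => i _; rewrite /p'; case: eqP => // ->; rewrite !scale0r.
Qed.

Lemma conv_hull_split S S1 C p : S1 0 -> (forall s, S s -> S1 s \/ recc C s) ->
  conv_hull S p -> exists2 p1, conv_hull S1 p1 & recc C (p - p1).
Proof.
move=> S1_0 S_split [k [P [w [SP w0 w1 ->]]]].
pose P1 i := if `[< S1 (P i) >] then P i else 0.
exists (\sum_i w i *: P1 i).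
  exists k, P1, w; split => // i; rewrite /P1.
  by have [S1P|S1P] := pselect (S1 (P i)); [rewrite asboolT | rewrite asboolF].
rewrite -sumrB; under eq_bigr do rewrite -scalerBr; apply: recc_sum => // i.
rewrite /P1; have [S1P|S1P] := pselect (S1 (P i)).
  by rewrite asboolT // subrr; apply: recc0.
by rewrite asboolF // subr0; case: (S_split _ (SP i)).
Qed.

Lemma convex_set_comb S x y t : convex_set (S : set (convex_lmodType vec)) ->
  0 <= t <= 1 -> S x -> S y -> S (t *: x + (1 - t) *: y).
Proof.
move=> convS /andP[t0 t1] Sx Sy.
exact: set_mem (convS x y (Itv01 t0 t1) (mem_set Sx) (mem_set Sy)).
Qed.

Lemma convex_line_between S z d h1 h2 t :
  convex_set (S : set (convex_lmodType vec)) -> h1 <= t <= h2 ->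
  S (z + h1 *: d) -> S (z + h2 *: d) -> S (z + t *: d).
Proof.
move=> convS /andP[h1t th2] S1 S2.
have [h12|h12] := eqVneq h1 h2.
  by move: th2 S2; rewrite -h12 => th1 _; rewrite (@le_anti _ _ t h1) ?th1.
have -> : z + t *: d = ((h2 - t) / (h2 - h1)) *: (z + h1 *: d)
    + (1 - (h2 - t) / (h2 - h1)) *: (z + h2 *: d).
  by apply/matrixP => i k; rewrite !mxE; field; rewrite subr_eq0 eq_sym.
have h21 : 0 < h2 - h1 by rewrite subr_gt0 lt_neqAle h12 (le_trans h1t).
apply: convex_set_comb => //; apply/andP; split.
  by apply: divr_ge0; [rewrite subr_ge0 | apply: ltW].
by rewrite ler_pdivrMr // mul1r lerD2l lerN2.
Qed.

(* y + lam d is a convex combination of a far point z + (lam D) d of the ray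
   and a point w that is close to y when D is large. *)
Lemma open_convex_recc C z d a :
  open C -> convex_set (C : set (convex_lmodType vec)) ->
  (forall t, a < t -> C (z + t *: d)) -> recc C d.
Proof.
move=> oC convC ray y lam Cy lam0.
have [->|lam_neq0] := eqVneq lam 0; first by rewrite scale0r addr0.
have lam_gt0 : 0 < lam by rewrite lt_neqAle eq_sym lam_neq0.
have [e /= e_gt0 ballC] := proj1 (nbhs_normP y C) (open_nbhs_nbhs (conj oC Cy)).
pose M := `|y - z|.
have M0 : 0 <= M by apply: normr_ge0.
pose D := 2 + `|a| / lam + 2 * M / e.
have D2 : 2 <= D by rewrite /D -addrA lerDl addr_ge0 ?divr_ge0 ?mulr_ge0 // ltW.
have D1 : 1 < D by apply: lt_le_trans D2; rewrite ltr1n.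
have D_neq0 : D != 0 by rewrite gt_eqF // (lt_trans ltr01).
pose w := (1 - D^-1)^-1 *: (y - D^-1 *: z).
have -> : y + lam *: d = D^-1 *: (z + (lam * D) *: d) + (1 - D^-1) *: w.
  apply/matrixP => i k; rewrite !mxE; field.
  by rewrite D_neq0 subr_eq0 gt_eqF.
apply: convex_set_comb => //.
- have D0 : 0 < D by apply: lt_trans D1.
  by rewrite invr_ge0 ltW //= invf_le1 // ltW.
- apply: ray; apply: le_lt_trans (ler_norm a) _.
  have -> : lam * D = `|a| + lam * (2 + 2 * M / e).
    by rewrite /D; field; rewrite lam_neq0 gt_eqF.
  have : 0 <= 2 * M / e by rewrite divr_ge0 ?mulr_ge0 // ltW.
  by rewrite ltrDl; move=> ?; rewrite mulr_gt0 //; lra.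
- apply: ballC => /=.
  have -> : y - w = (- (D - 1)^-1) *: (y - z).
    by apply/matrixP => i k; rewrite /w !mxE; field; rewrite D_neq0 subr_eq0 gt_eqF.
  rewrite mx_normZ normrN ger0_norm ?invr_ge0 ?subr_ge0 ?ltW // mulrC.
  rewrite -/M ltr_pdivrMr ?subr_gt0 //.
  have -> : e * (D - 1) = (1 + `|a| / lam) * e + 2 * M.
    by rewrite /D; field; rewrite lam_neq0 gt_eqF.
  have a0 : 0 <= `|a| / lam by rewrite divr_ge0 // ltW.
  have : 0 < (1 + `|a| / lam) * e by rewrite mulr_gt0 //; lra.
  by set u := (1 + _) * e; lra.
Qed.

End Vectors.

(** * The cone P^B and the sets T^C, S_0^C and S_k^C *)

Section Polyhedron.
Context {R : realType} {m n : nat} {A : 'M[R]_(m, n)} {b : 'cV[R]_m}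
  {B : {set 'I_n}}.
Local Notation vec := 'cV[R]_n.

Lemma recc_PB x0 d : PB A b B x0 -> recc (PB A b B) d ->
  A *m d = 0 /\ (forall j, j \notin B -> 0 <= d j 0).
Proof.
move=> PBx0 dPB; split.
  have [] := dPB x0 1 PBx0 ler01; case: PBx0 => Ax0 _.
  by rewrite scale1r mulmxDr Ax0 -{2}[b]addr0 => /addrI.
move=> j jB; rewrite leNgt; apply/negP => dj_lt0.
have x0j : 0 <= x0 j 0 by case: PBx0 => _; apply.
have lam0 : 0 <= (x0 j 0 + 1) / - d j 0.
  by rewrite divr_ge0 ?addr_ge0 // oppr_ge0 ltW.
have [_ /(_ j jB)] := dPB x0 _ PBx0 lam0; rewrite !mxE.
have -> : (x0 j 0 + 1) / - d j 0 * d j 0 = - (x0 j 0 + 1).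
  by field; rewrite lt_eqF.
lra.
Qed.

Context {C : set vec}.
Local Notation xb := (xbar A b B).
Local Notation rb := (rbar A B).
Local Notation al := (alpha A b B C).
Local Notation be := (beta A b B C).
Local Notation N1' := (N1 A b B C).
Local Notation N2' := (N2 A b B C).
Local Notation N12' := (N12 A b B C).
Local Notation a_ j := (fine (al j)).
Local Notation b_ j := (fine (be j)).
Local Notation K := (recc C).

Definition T_rays : set vec := [set v | exists j lam, [/\ N12' j,
  (al j < lam%:E)%E, (lam%:E < be j)%E & v = lam *: rb j]].
Definition S0_rays : set vec := [set v | exists j lam, [/\ N12' j,
  (al j < lam%:E)%E & v = lam *: rb j]].
Definition Sk_rays : set vec := [set v | exists j lam, [/\ N2' j, 0 <= lam,
  (lam%:E < be j)%E & v = lam *: rb j]].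

Hypothesis C_open : open C.
Hypothesis C_convex : convex_set (C : set (convex_lmodType vec)).

Lemma N2_N12 {j} : N2' j -> N12' j. Proof. by right. Qed.

Lemma N12_notB {j} : N12' j -> j \notin B. Proof. by case=> [[]|[]]. Qed.

Lemma N12_N1 {j} : N12' j -> ~ N2' j -> N1' j. Proof. by case. Qed.

Lemma alphaE {j} : N12' j -> al j = (a_ j)%:E /\ 0 < a_ j.
Proof.
have finE : (0 < al j < +oo)%E -> al j = (a_ j)%:E /\ 0 < a_ j.
  case/andP=> a0 aoo.
  have aE : al j = (a_ j)%:E by rewrite fineK // ge0_fin_numE // ltW.
  by split => //; rewrite -lte_fin -aE.
by case=> [[_ [? _]]|[_ [? _]]]; apply: finE.
Qed.

Lemma betaE {j} : N2' j -> be j = (b_ j)%:E /\ a_ j < b_ j.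
Proof.
move=> N2j; have [aE a0] := alphaE (N2_N12 N2j).
case: N2j => _ [_ /andP[ab boo]].
have b0 : (0 <= be j)%E by apply: le_trans (ltW ab); rewrite aE lee_fin ltW.
have bE : be j = (b_ j)%:E by rewrite fineK // ge0_fin_numE.
by split => //; rewrite -lte_fin -bE -aE.
Qed.

Lemma beta_gt0 {j} : N2' j -> 0 < b_ j.
Proof.
by move=> N2j; apply: lt_trans (proj2 (betaE N2j)); case: (alphaE (N2_N12 N2j)).
Qed.

Lemma N1_recc {j} : N1' j -> K (rb j).
Proof.
move=> N1j; have [aE _] := alphaE (or_introl N1j).
apply: (@open_convex_recc _ _ _ xb _ (a_ j)) => // t; rewrite -lte_fin -aE => alt.
have [_ [h1 [h10 Ch1] <-]] := ereal_inf_lt alt; rewrite lte_fin => h1t.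
case: N1j => _ [_ beoo].
have tbe : (t%:E < be j)%E by rewrite beoo ltey.
have [_ [h2 [h20 Ch2] <-]] := ereal_sup_gt tbe.
by rewrite lte_fin => th2; apply: convex_line_between Ch1 Ch2; rewrite ?ltW.
Qed.

Hypothesis xb_notinC : ~ C xb.

(* rbar j is the junk value 0 when its defining system is unsolvable; then the
   point xb + lam rb j of C provided by N12' j would be xb itself. *)
Lemma rbar_spec {j} : N12' j ->
  [/\ A *m rb j = 0, rb j j 0 = 1 & forall k, k \notin B -> k != j -> rb j k 0 = 0].
Proof.
move=> N12j; have [aE _] := alphaE N12j.
have aoo : (al j < +oo)%E by rewrite aE ltey.
have [_ [lam [_ Clam] _] _] := ereal_inf_lt aoo.
have [exR|noR] := pselect (exists r : vec, [/\ A *m r = 0, r j 0 = 1 &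
                   forall k, k \notin B -> k != j -> r k 0 = 0]).
  exact: (xgetPex 0 exR).
by move: Clam; rewrite /rbar xgetPN ?scaler0 ?addr0 // => r Pr; apply: noR; exists r.
Qed.

Lemma rbar_coord {j k} : N12' j -> k \notin B -> rb j k 0 = (k == j)%:R.
Proof.
move=> N12j kB; have [_ r1 r0] := rbar_spec N12j.
by have [->|kj] := eqVneq k j; [rewrite r1 | rewrite r0].
Qed.

Lemma dotv_rbar {c j} : (forall k, k \in B -> c k = 0) -> N12' j -> dotv c (rb j) = c j.
Proof.
move=> cB N12j; rewrite /dotv (bigD1 j) //= rbar_coord ?eqxx ?mulr1 ?N12_notB //.
rewrite big1 ?addr0 // => k kj.
have [kB|kB] := boolP (k \in B); first by rewrite cB ?mul0r.
by rewrite rbar_coord // (negbTE kj) mulr0.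
Qed.

Definition inv_alpha j := if `[< N12' j >] then (a_ j)^-1 else 0.
Definition inv_beta j := if `[< N2' j >] then (b_ j)^-1 else 0.
Local Notation ia := inv_alpha.
Local Notation ib := inv_beta.

Lemma inv_alphaE j : N12' j -> ia j = (a_ j)^-1.
Proof. by move=> N12j; rewrite /inv_alpha asboolT. Qed.

Lemma inv_alpha0 j : ~ N12' j -> ia j = 0.
Proof. by move=> N12j; rewrite /inv_alpha asboolF. Qed.

Lemma inv_betaE j : N2' j -> ib j = (b_ j)^-1.
Proof. by move=> N2j; rewrite /inv_beta asboolT. Qed.

Lemma inv_beta0 j : ~ N2' j -> ib j = 0.
Proof. by move=> N2j; rewrite /inv_beta asboolF. Qed.

Lemma inv_beta_notN12 j : ~ N12' j -> ib j = 0.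
Proof. by move=> N12j; apply: inv_beta0 => /N2_N12. Qed.

Lemma inv_alphaB j : j \in B -> ia j = 0.
Proof. by move=> jB; apply: inv_alpha0 => /N12_notB; rewrite jB. Qed.

Lemma inv_betaB j : j \in B -> ib j = 0.
Proof. by move=> jB; apply: inv_beta_notN12 => /N12_notB; rewrite jB. Qed.

Lemma inv_beta_ge0 j : 0 <= ib j.
Proof.
have [N2j|N2j] := pselect (N2' j); last by rewrite inv_beta0.
by rewrite inv_betaE // invr_ge0 ltW // beta_gt0.
Qed.

Lemma inv_beta_lt_alpha j : N12' j -> ib j < ia j.
Proof.
move=> N12j; have [_ a0] := alphaE N12j; rewrite inv_alphaE //.
have [N2j|N2j] := pselect (N2' j); last by rewrite inv_beta0 // invr_gt0.
by rewrite inv_betaE // ltf_pV2 ?posrE ?beta_gt0 //; case: (betaE N2j).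
Qed.

Lemma inv_gap_term_ge0 (q : vec) j : (forall j, j \notin B -> 0 <= q j 0) ->
  0 <= (ia j - ib j) * q j 0.
Proof.
move=> q0; have [N12j|N12j] := pselect (N12' j).
  apply: mulr_ge0; last exact/q0/N12_notB.
  by rewrite subr_ge0; apply/ltW/inv_beta_lt_alpha.
by rewrite inv_alpha0 ?inv_beta_notN12 ?subrr ?mul0r.
Qed.

Lemma inv_gap_ge0 (q : vec) : (forall j, j \notin B -> 0 <= q j 0) ->
  0 <= dotv ia q - dotv ib q.
Proof.
move=> q0; rewrite /dotv -sumrB; apply: sumr_ge0 => j _.
by rewrite -mulrBl inv_gap_term_ge0.
Qed.

Lemma inv_gap_gt0 (q : vec) : (forall j, j \notin B -> 0 <= q j 0) ->
  1 < dotv ia q -> 0 < dotv ia q - dotv ib q.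
Proof.
move=> q0 gt1; have [j qj_gt0] : exists j, 0 < ia j * q j 0.
  apply: contrapT => /forallNP noj; move: gt1; apply/negP; rewrite -leNgt.
  apply: le_trans (_ : 0 <= 1) => //; apply: sumr_le0 => j _.
  by rewrite leNgt; apply/negP/noj.
have N12j : N12' j.
  by apply: contrapT => N12j; move: qj_gt0; rewrite inv_alpha0 // mul0r ltxx.
have ia_gt0 : 0 < ia j by rewrite inv_alphaE // invr_gt0; case: (alphaE N12j).
have qj0 : 0 < q j 0 by rewrite -(pmulr_rgt0 _ ia_gt0).
rewrite /dotv -sumrB (bigD1 j) //= -mulrBl.
rewrite ltr_pwDl ?mulr_gt0 ?subr_gt0 ?inv_beta_lt_alpha //.
by apply: sumr_ge0 => i _; rewrite -mulrBl inv_gap_term_ge0.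
Qed.

Lemma sum_rbar_coord (c : 'I_n -> R) k : k \notin B ->
  (\sum_(j | `[< N12' j >]) c j *: rb j) k 0 = if `[< N12' k >] then c k else 0.
Proof.
move=> kB; rewrite summxE.
have [N12k|N12k] := pselect (N12' k).
  rewrite asboolT // (bigD1 k) ?asboolT //= mxE rbar_coord // eqxx mulr1.
  rewrite big1 ?addr0 // => j /andP[/asboolP N12j jk].
  by rewrite mxE rbar_coord // eq_sym (negbTE jk) mulr0.
rewrite asboolF // big1 // => j /asboolP N12j.
by rewrite mxE rbar_coord //; case: eqP => [kj|]; [rewrite kj in N12k | rewrite mulr0].
Qed.

Hypothesis basisB : is_basis A B.

Lemma cone_decomp {q} : A *m q = 0 -> (forall j, j \notin B -> ~ N12' j -> q j 0 = 0) ->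
  q = \sum_(j | `[< N12' j >]) q j 0 *: rb j.
Proof.
move=> Aq qN; apply/eqP; rewrite -subr_eq0; apply/eqP; apply: basisB.2.
  move=> k kB; rewrite !mxE sum_rbar_coord //.
  have [N12k|N12k] := pselect (N12' k); first by rewrite asboolT ?subrr.
  by rewrite asboolF ?qN ?subr0.
rewrite mulmxBr Aq mulmx_sumr sub0r big1 ?oppr0 // => j /asboolP N12j.
by rewrite -scalemxAr; case: (rbar_spec N12j) => -> _ _; rewrite scaler0.
Qed.

Lemma T_ray_inv j l : N12' j -> ib j < l < ia j -> T_rays (l^-1 *: rb j).
Proof.
move=> N12j /andP[ibl lia]; have [aE a0] := alphaE N12j.
have l0 : 0 < l by apply: le_lt_trans (inv_beta_ge0 j) ibl.
exists j, l^-1; split => //.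
  by rewrite aE lte_fin -[a_ j]invrK ltf_pV2 ?posrE ?invr_gt0 // -inv_alphaE.
have [N2j|N2j] := pselect (N2' j).
  have [bE _] := betaE N2j.
  by rewrite bE lte_fin -[b_ j]invrK ltf_pV2 ?posrE ?invr_gt0 ?beta_gt0 // -inv_betaE.
by have [_ [_ ->]] := N12_N1 N12j N2j; rewrite ltey.
Qed.

Lemma exists_T_weights {q : vec} : (forall j, j \notin B -> 0 <= q j 0) ->
  dotv ib q < 1 -> 1 < dotv ia q ->
  exists l : 'I_n -> R, [/\ forall j, N12' j -> ib j < l j < ia j,
                          forall j, ~ N12' j -> l j = 0 & dotv l q = 1].
Proof.
move=> q0 G1 F1; set F := dotv ia q in F1 *; set G := dotv ib q in G1 *.
have FG : 0 < F - G by rewrite subr_gt0 (lt_trans G1 F1).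
pose t := (F - 1) / (F - G).
have t0 : 0 < t by rewrite divr_gt0 // subr_gt0.
have t1 : t < 1 by rewrite ltr_pdivrMr // mul1r ltrD2l ltrN2.
exists (fun j => (1 - t) * ia j + t * ib j); split.
- move=> j /inv_beta_lt_alpha; set u := ia j; set v := ib j => vu.
  by apply/andP; split; nra.
- by move=> j N12j; rewrite inv_alpha0 // inv_beta_notN12 // !mulr0 addr0.
- by rewrite dotv_convl -/F -/G /t; field; rewrite gt_eqF.
Qed.

Lemma conv_T_rays q : A *m q = 0 -> (forall j, j \notin B -> 0 <= q j 0) ->
  (forall j, j \notin B -> ~ N12' j -> q j 0 = 0) ->
  dotv ib q < 1 -> 1 < dotv ia q -> conv_hull T_rays q.
Proof.
move=> Aq q0 qN G1 F1; have [l [lP l0 lq]] := exists_T_weights q0 G1 F1.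
have l_gt0 j : N12' j -> 0 < l j.
  by case/lP/andP => + _; apply: le_lt_trans (inv_beta_ge0 j).
have -> : q = \sum_j (l j * q j 0) *: ((l j)^-1 *: rb j).
  rewrite {1}(cone_decomp Aq qN) big_mkcond; apply: eq_bigr => j _ /=.
  have [N12j|N12j] := pselect (N12' j); last by rewrite asboolF // l0 // mul0r scale0r.
  by rewrite asboolT // scalerA mulrAC mulfV ?mul1r // gt_eqF ?l_gt0.
apply: conv_hull_sum => // j.
  have [N12j|N12j] := pselect (N12' j); last by rewrite l0 ?mul0r.
  by rewrite mulr_ge0 ?q0 ?N12_notB // ltW ?l_gt0.
have [N12j _|N12j] := pselect (N12' j); last by rewrite l0 ?mul0r ?eqxx.
exact: T_ray_inv (lP j N12j).
Qed.

Hypothesis reccC_cone : forall d, K d ->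
  A *m d = 0 /\ (forall j, j \notin B -> 0 <= d j 0).

(* e is admissible for mu when xb + mu = xb + (mu - e) + e with e in recc C and
   mu - e in the cone spanned by the rbar j, j in N12. *)
Definition admissible (mu e : vec) := [/\ K e,
  forall j, j \notin B -> e j 0 <= mu j 0 &
  forall j, j \notin B -> ~ N12' j -> e j 0 = mu j 0].

Definition Sk_witness (mu : vec) k (e p : vec) (t : R) := [/\ K e, 0 <= t,
  mu = p - t *: rb k + e,
  forall j, j \notin B -> 0 <= p j 0 /\ (~ N2' j -> p j 0 = 0) &
  dotv ib p < 1].

Lemma admissible_conv mu e1 e2 t : 0 <= t <= 1 ->
  admissible mu e1 -> admissible mu e2 -> admissible mu (t *: e1 + (1 - t) *: e2).
Proof.
move=> t01 [K1 le1 eq1] [K2 le2 eq2]; split; first exact: recc_conv.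
  move=> j jB; rewrite !mxE; have := le1 j jB; have := le2 j jB.
  by case/andP: t01; nra.
by move=> j jB N12j; rewrite !mxE eq1 // eq2 //; ring.
Qed.

Lemma witness_coord {mu k e p t j} : N2' k -> Sk_witness mu k e p t -> j \notin B ->
  mu j 0 - e j 0 = p j 0 - t * (j == k)%:R.
Proof.
move=> N2k [_ _ muE _ _] jB.
by rewrite {1}muE !mxE (rbar_coord (N2_N12 N2k) jB); ring.
Qed.

Lemma witness_dotv {mu k e p t} : N2' k -> Sk_witness mu k e p t ->
  dotv ib (mu - e) <= dotv ib p.
Proof.
move=> N2k [_ t0 muE _ _].
have -> : mu - e = p - t *: rb k by rewrite {1}muE addrK.
rewrite dotvB dotvZ (dotv_rbar inv_betaB (N2_N12 N2k)).
by rewrite gerBl mulr_ge0 ?inv_beta_ge0.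
Qed.

Lemma witness_le_off {mu k e p t} : N2' k -> Sk_witness mu k e p t ->
  (forall j, j \notin B -> j != k -> e j 0 <= mu j 0) /\
  (forall j, j \notin B -> ~ N12' j -> e j 0 = mu j 0).
Proof.
move=> N2k W; have [_ _ _ p0 _] := W.
have coordE j : j \notin B -> j != k -> mu j 0 - e j 0 = p j 0.
  by move=> jB jk; rewrite (witness_coord N2k W jB) (negbTE jk) mulr0 subr0.
split=> [j jB jk|j jB N12j].
  by rewrite -subr_ge0 coordE //; case: (p0 j jB).
have jk : j != k by apply/eqP => jk; apply: N12j; rewrite jk; apply: N2_N12.
apply/eqP; rewrite eq_sym -subr_eq0 coordE //.
by case: (p0 j jB) => _ ->; last by move/N2_N12.
Qed.

Lemma witness_admissible {mu k e p t} : N2' k -> Sk_witness mu k e p t ->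
  e k 0 <= mu k 0 -> admissible mu e.
Proof.
move=> N2k W ek_le; have [Ke _ _ _ _] := W.
have [le_off eq_off] := witness_le_off N2k W.
split => // j jB; have [->|jk] := eqVneq j k; [exact: ek_le | exact: le_off].
Qed.

Lemma admissible_mix {mu k e ek pk tk} th : N2' k -> admissible mu e ->
  Sk_witness mu k ek pk tk -> 0 <= th <= 1 ->
  th * e k 0 + (1 - th) * ek k 0 <= mu k 0 -> admissible mu (th *: e + (1 - th) *: ek).
Proof.
move=> N2k [Ke eL eN] W th01 le_k; have [Kek _ _ _ _] := W.
have [ekL ekN] := witness_le_off N2k W.
split; first exact: recc_conv.
  move=> j jB; rewrite !mxE; have [->|jk] := eqVneq j k; first exact: le_k.
  by have := eL j jB; have := ekL j jB jk; case/andP: th01; nra.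
by move=> j jB N12j; rewrite !mxE eN // ekN //; ring.
Qed.

Lemma admissible_improve {mu e : vec} {k ek pk tk} :
  (forall j, j \notin B -> 0 <= mu j 0) -> N2' k -> admissible mu e ->
  Sk_witness mu k ek pk tk -> mu k 0 < ek k 0 -> 1 <= dotv ib (mu - e) ->
  (n.+1%:R)^-1 <= ib k * (mu k 0 - e k 0) ->
  exists e', admissible mu e' /\ dotv ib (mu - e') <=
    dotv ib (mu - e) - b_ k / (n.+1%:R * ek k 0) * (1 - dotv ib pk).
Proof.
move=> mu0 N2k Ee W mu_lt fe1 large; have [Ke eL _] := Ee.
have kB : k \notin B by apply/N12_notB/N2_N12.
have ek0 : 0 <= e k 0 by case: (reccC_cone _ Ke) => _; apply.
set E := ek k 0; set d := mu k 0 - e k 0.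
have E0 : 0 < E by apply: le_lt_trans mu_lt; apply: mu0.
have Ee_gt0 : 0 < E - e k 0 by rewrite subr_gt0 (le_lt_trans (eL k kB) mu_lt).
have bd : b_ k / n.+1%:R <= d.
  move: large; rewrite inv_betaE // => /(ler_wpM2l (ltW (beta_gt0 N2k))).
  by rewrite mulrA mulfV ?mul1r // gt_eqF ?beta_gt0.
have d0 : 0 < d by apply: lt_le_trans bd; rewrite divr_gt0 ?beta_gt0 ?ltr0n.
pose th := (E - mu k 0) / (E - e k 0).
have th01 : 0 <= th <= 1.
  apply/andP; split; first by apply: divr_ge0; [rewrite subr_ge0 ltW | apply: ltW].
  by rewrite ler_pdivrMr // mul1r lerD2l lerN2 eL.
have oneth : 1 - th = d / (E - e k 0) by rewrite /th /d; field; rewrite gt_eqF.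
have coord_k : th * e k 0 + (1 - th) * E <= mu k 0.
  by rewrite le_eqVlt; apply/orP; left; apply/eqP; rewrite /th; field; rewrite gt_eqF.
exists (th *: e + (1 - th) *: ek); split; first exact: admissible_mix Ee W th01 coord_k.
have c_le : b_ k / (n.+1%:R * E) <= 1 - th.
  rewrite oneth invfM mulrA; apply: (@le_trans _ _ (d / E)).
    by rewrite ler_pM2r ?invr_gt0.
  by rewrite ler_pM2l // lef_pV2 ?posrE // gerBl.
have c0 : 0 <= b_ k / (n.+1%:R * E) by rewrite divr_ge0 ?mulr_ge0 ?ltW ?beta_gt0.
have [_ _ _ _ pk1] := W; have fek := witness_dotv N2k W.
case/andP: th01 => th0 th1; rewrite dotv_conv; move: c_le c0 pk1 fek fe1.
set c := b_ k / _; set Fe := dotv ib (mu - e); set Fk := dotv ib (mu - ek).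
by set Z := dotv ib pk => *; nra.
Qed.

(* Unless some witness e_k is already admissible, each admissible e with
   ib (mu - e) >= 1 can be moved towards a witness e_k, with the factor chosen to
   restore coordinate k, gaining at least g k; descent then concludes. *)
Lemma exists_admissible_lt1 {mu e0 : vec} {ek pk : 'I_n -> vec} {tk : 'I_n -> R} :
  (forall j, j \notin B -> 0 <= mu j 0) -> admissible mu e0 ->
  (forall k, N2' k -> Sk_witness mu k (ek k) (pk k) (tk k)) ->
  exists e, admissible mu e /\ dotv ib (mu - e) < 1.
Proof.
move=> mu0 E0 W.
have [[k [N2k le_k]]|ek_gt] := pselect (exists k, N2' k /\ ek k k 0 <= mu k 0).
  exists (ek k); split; first exact: witness_admissible N2k (W k N2k) le_k.
  by apply: le_lt_trans (witness_dotv N2k (W k N2k)) _; case: (W k N2k).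
have {}ek_gt k : N2' k -> mu k 0 < ek k k 0.
  by move=> N2k; rewrite ltNge; apply/negP => le_k; apply: ek_gt; exists k.
pose g k := if `[< N2' k >] then
  b_ k / (n.+1%:R * ek k k 0) * (1 - dotv ib (pk k)) else 1.
have [gam gam0 gam_le] : exists2 gam, 0 < gam & forall k, gam <= g k.
  apply: exists_pos_lower_bound => k; rewrite /g.
  have [N2k|N2k] := pselect (N2' k); last by rewrite asboolF.
  have [_ _ _ _ pk1] := W k N2k.
  have ek0 : 0 < ek k k 0.
    by apply: le_lt_trans (ek_gt k N2k); apply/mu0/N12_notB/N2_N12.
  by rewrite asboolT // mulr_gt0 ?subr_gt0 // divr_gt0 ?mulr_gt0 ?beta_gt0.
apply: (@descent_lt _ _ (admissible mu) (fun e => dotv ib (mu - e)) 1 gam e0 gam0 E0).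
move=> e Ee fe1; have [k] := exists_large_term fe1; rewrite !mxE => large.
have N2k : N2' k.
  apply: contrapT => N2k; move: large.
  by rewrite inv_beta0 // mul0r leNgt invr_gt0 ltr0n.
have [e' [Ee' le_e']] :=
  admissible_improve mu0 N2k Ee (W k N2k) (ek_gt k N2k) fe1 large.
exists e'; split => //; apply: le_trans le_e' _.
by rewrite lerD2l lerN2 (le_trans (gam_le k)) // /g asboolT.
Qed.

Lemma ray_gt0 {j lam} : N12' j -> (al j < lam%:E)%E -> 0 < lam.
Proof.
by move=> N12j; have [-> a0] := alphaE N12j; rewrite lte_fin; apply: lt_trans.
Qed.

Lemma conv_S0_rays {p} : conv_hull S0_rays p -> [/\ A *m p = 0,
  forall j, j \notin B -> 0 <= p j 0,
  forall j, j \notin B -> ~ N12' j -> p j 0 = 0 & 1 < dotv ia p].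
Proof.
move=> pS; split.
- apply: conv_mulmx0 pS => _ [j [lam [N12j _ ->]]].
  by rewrite -scalemxAr; case: (rbar_spec N12j) => -> _ _; rewrite scaler0.
- move=> i iB; apply: conv_coord_ge0 pS => _ [j [lam [N12j alam ->]]].
  by rewrite mxE rbar_coord // mulr_ge0 // ltW // (ray_gt0 N12j alam).
- move=> i iB N12i; apply: conv_coord_eq0 pS => _ [j [lam [N12j _ ->]]].
  rewrite mxE rbar_coord //; case: eqP => [ij|]; last by rewrite mulr0.
  by rewrite ij in N12i.
- apply: conv_dotv_gt pS => _ [j [lam [N12j alam ->]]].
  rewrite dotvZ (dotv_rbar inv_alphaB N12j) inv_alphaE //.
  have [aE a0] := alphaE N12j; move: alam; rewrite aE lte_fin => alam.
  by rewrite ltr_pdivlMr // mul1r.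
Qed.

Lemma conv_Sk_rays {p} : conv_hull Sk_rays p ->
  (forall j, j \notin B -> 0 <= p j 0 /\ (~ N2' j -> p j 0 = 0)) /\ dotv ib p < 1.
Proof.
move=> pS; split=> [i iB|]; first split.
- apply: conv_coord_ge0 pS => _ [j [lam [N2j lam0 _ ->]]].
  by rewrite mxE (rbar_coord (N2_N12 N2j) iB) mulr_ge0.
- move=> N2i; apply: conv_coord_eq0 pS => _ [j [lam [N2j _ _ ->]]].
  rewrite mxE (rbar_coord (N2_N12 N2j) iB); case: eqP => [ij|]; last by rewrite mulr0.
  by rewrite ij in N2i.
- apply: conv_dotv_lt pS => _ [j [lam [N2j _ lamb ->]]].
  rewrite dotvZ (dotv_rbar inv_betaB (N2_N12 N2j)) inv_betaE //.
  have [bE _] := betaE N2j; move: lamb; rewrite bE lte_fin => lamb.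
  by rewrite ltr_pdivrMr ?mul1r ?beta_gt0.
Qed.

Lemma SkC_witness {mu k} : SkC A b B C k (xb + mu) ->
  exists e p t, Sk_witness mu k e p t.
Proof.
move=> [_ [_ [-> [p [_ [pS [_ [e [[lam [lam0 ->]] Ke ->]] ->]]] /addrI muE]]]].
have [p_coord p_lt1] := conv_Sk_rays pS.
exists e, p, (- lam); split => //; first by rewrite oppr_ge0.
by rewrite muE scaleNr opprK addrA.
Qed.

Lemma admissible_in_T {mu e} : A *m mu = 0 -> admissible mu e ->
  dotv ib (mu - e) < 1 -> 1 < dotv ia (mu - e) -> TC A b B C (xb + mu).
Proof.
move=> Amu [Ke eL eN] G1 F1; have [Ae _] := reccC_cone _ Ke.
exists xb, mu; split => //; exists (mu - e), e; split; rewrite ?subrK //.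
apply: conv_T_rays => //.
- by rewrite mulmxBr Amu Ae subrr.
- by move=> j jB; rewrite !mxE subr_ge0 eL.
- by move=> j jB N12j; rewrite !mxE eN // subrr.
Qed.

Lemma admissible_sub_ge0 {mu e} : admissible mu e ->
  forall j, j \notin B -> 0 <= (mu - e) j 0.
Proof. by case=> _ eL _ j jB; rewrite !mxE subr_ge0 eL. Qed.

Lemma admissible_combine {mu e0 e1} : admissible mu e0 -> admissible mu e1 ->
  1 < dotv ia (mu - e0) -> dotv ib (mu - e1) < 1 ->
  exists e, [/\ admissible mu e, dotv ib (mu - e) < 1 & 1 < dotv ia (mu - e)].
Proof.
move=> E0 E1 F0 G1.
have u1 : 0 < dotv ia (mu - e0) - 1 by rewrite subr_gt0.
have v0 : 0 < 1 - dotv ib (mu - e1) by rewrite subr_gt0.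
have uv1 : 0 < (dotv ia (mu - e0) - 1) + (1 - dotv ib (mu - e0)).
  by rewrite addrA subrK; apply: inv_gap_gt0 (admissible_sub_ge0 E0) F0.
have uv0 : 0 <= (dotv ia (mu - e1) - 1) + (1 - dotv ib (mu - e1)).
  by rewrite addrA subrK; apply: inv_gap_ge0 (admissible_sub_ge0 E1).
have [th [th0 th1 F_gt1 G_lt1]] := exists_convex_comb_gt0 u1 v0 uv1 uv0.
exists (th *: e0 + (1 - th) *: e1); split; rewrite ?dotv_conv.
- by apply: admissible_conv; rewrite ?th0.
- by rewrite -subr_gt0; apply: lt_le_trans G_lt1 _; lra.
- by rewrite -subr_gt0; apply: lt_le_trans F_gt1 _; lra.
Qed.

Lemma S0_Sk_sub_T x : S0C A b B C x ->
  (forall k, N2' k -> SkC A b B C k x) -> TC A b B C x.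
Proof.
move=> [_ [_ [-> [p0 [e0 [p0S Ke0 ->]]] ->]]] xSk.
have [Ap0 p0_ge0 p0_off p0_gt1] := conv_S0_rays p0S.
have [Ae0 e0_ge0] := reccC_cone _ Ke0.
have E0 : admissible (p0 + e0) e0.
  split => // j jB; rewrite mxE ?lerDr ?p0_ge0 //.
  by move=> N12j; rewrite p0_off // add0r.
have mu0 j : j \notin B -> 0 <= (p0 + e0) j 0.
  by move=> jB; rewrite mxE addr_ge0 ?p0_ge0 ?e0_ge0.
have /choice[w W] : forall k, exists w : vec * vec * R,
    N2' k -> Sk_witness (p0 + e0) k w.1.1 w.1.2 w.2.
  move=> k; have [N2k|N2k] := pselect (N2' k); last by exists (0, 0, 0).
  by have [e [p [t ?]]] := SkC_witness (xSk k N2k); exists (e, p, t).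
have [e1 [E1 G1]] := exists_admissible_lt1 mu0 E0 W.
have F0 : 1 < dotv ia (p0 + e0 - e0) by rewrite addrK.
have [e [Ee G F]] := admissible_combine E0 E1 F0 G1.
by apply: admissible_in_T Ee G F; rewrite mulmxDr Ap0 Ae0 addr0.
Qed.

Lemma T_sub_S0 : TC A b B C `<=` S0C A b B C.
Proof.
move=> _ [_ [_ [-> [p [d [[k [P [w [PT w0 w1 ->]]]] Kd ->]]] ->]]].
exists xb, (\sum_i w i *: P i + d); split => //; exists (\sum_i w i *: P i), d.
split => //; exists k, P, w; split => // i.
by have [j [lam [N12j alam _ ->]]] := PT i; exists j, lam.
Qed.

Lemma T_sub_Sk {k} : N2' k -> TC A b B C `<=` SkC A b B C k.
Proof.
move=> N2k _ [_ [_ [-> [p [d [pT Kd ->]]] ->]]].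
have [p1 p1S Kp] : exists2 p1, conv_hull Sk_rays p1 & K (p - p1).
  apply: conv_hull_split pT.
    exists k, 0; split; rewrite ?scale0r //.
    have [-> ab] := betaE N2k; have [_ a0] := alphaE (N2_N12 N2k).
    by rewrite lte_fin (lt_trans a0).
  move=> _ [j [lam [N12j alam lamb ->]]].
  have lam0 := ray_gt0 N12j alam.
  have [N2j|N2j] := pselect (N2' j); last first.
    by right; apply: reccZ; [apply: ltW | apply: N1_recc (N12_N1 N12j N2j)].
  by left; exists j, lam; split; rewrite ?ltW.
exists xb, (p + d); split => //; exists p1, (0 *: rb k + (p - p1 + d)); split => //.
  by exists (0 *: rb k), (p - p1 + d); split => //; [exists 0 | apply: reccD].
by rewrite scale0r add0r addrA addrCA subrr addr0.
Qed.

End Polyhedron.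

Theorem theorem5 (R : realType) (m n : nat) (A : 'M[R]_(m, n))
  (b : 'cV[R]_m) (B : {set 'I_n}) (C : set 'cV[R]_n) :
  \rank A = m ->
  is_basis A B ->
  (forall i, 0 <= xbar A b B i 0) ->
  open C ->
  convex_set (C : set (convex_lmodType 'cV[R]_n)) ->
  ~ closure C (xbar A b B) ->
  recc C `<=` recc (PB A b B) ->
  PB A b B `\` TC A b B C =
    (PB A b B `\` S0C A b B C) `|`
    \bigcup_(k in N2 A b B C) (PB A b B `\` SkC A b B C k).
Proof.
move=> _ basisB _ C_open C_convex xb_ncl reccC_sub.
have xb_notinC : ~ C (xbar A b B) by move=> Cxb; apply/xb_ncl/subset_closure.
apply/seteqP; split => x /=.
- move=> [PBx notTx].
  have reccC_cone d : recc C d -> A *m d = 0 /\ (forall j, j \notin B -> 0 <= d j 0).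
    by move=> Cd; apply: recc_PB PBx (reccC_sub d Cd).
  have [S0x|] := pselect (S0C A b B C x); last by left.
  have [[k N2k notSkx]|allSk] := pselect (exists2 k, N2 A b B C k & ~ SkC A b B C k x).
    by right; exists k.
  exfalso; apply/notTx/(S0_Sk_sub_T xb_notinC basisB reccC_cone x S0x) => k N2k.
  by apply: contrapT => notSkx; apply: allSk; exists k.
- case=> [[PBx notS0x]|[k N2k [PBx notSkx]]]; split => // Tx.
    exact/notS0x/T_sub_S0.
  exact/notSkx/(T_sub_Sk C_open C_convex N2k).
Qed.
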